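(* Let $(\nu_n)_{n=1}^\infty$ be an increasing sequence of positive integers and let $\alpha=\liminf_{n\to\infty}\frac{\nu_n}{n}\in[0,\infty]$. Let \[F((\nu_n)_{n=1}^\infty)=\{x\in J\colon a_{n}(x),\ldots,a_{n+\nu_n-1}(x)\ \text{is an arithmetic progression for infinitely many}\ n\geq1\}.\] Then $\dim_{\rm H} F((\nu_n)_{n=1}^\infty)\ge \frac{1}{2(1+\alpha)}$ (interpreted as $0$ when $\alpha=\infty$).
   Context: Every irrational $x\in(0,1)$ has a regular continued fraction expansion with partial quotients $a_n(x)\in\mathbb N$, $n\ge1$. $J=\{x\in(0,1)\setminus\mathbb Q\colon a_n(x)<a_{n+1}(x)\text{ for every }n\ge1\}$. $\dim_{\rm H}$ denotes Hausdorff dimension in $[0,1]$. *)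

From Stdlib Require Import Reals QArith ZArith Lra Lia.
From Coquelicot Require Import Coquelicot.
Open Scope R_scope.

Definition irrational (x : R) : Prop := ~ exists q : Q, x = Q2R q.

Definition gauss (x : R) : R := / x - IZR (Int_part (/ x)).

(** Partial quotient a_n(x) for n >= 1: a_n(x) = floor(1 / T^(n-1) x).
    (The value at n = 0 is irrelevant and never used.) *)
Definition cf_digit (x : R) (n : nat) : nat :=
  Z.to_nat (Int_part (/ (Nat.iter (n - 1) gauss x))).

Definition J (x : R) : Prop :=
  0 < x < 1 /\ irrational x /\
  forall n : nat, (1 <= n)%nat -> (cf_digit x n < cf_digit x (n + 1))%nat.

Definition cf_AP (x : R) (n len : nat) : Prop :=
  forall i : nat, (i + 2 <= len)%nat ->
    (Z.of_nat (cf_digit x (n + i + 1)) - Z.of_nat (cf_digit x (n + i)))%Z =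
    (Z.of_nat (cf_digit x (n + i + 2)) - Z.of_nat (cf_digit x (n + i + 1)))%Z.

Definition F_set (nu : nat -> nat) (x : R) : Prop :=
  J x /\ forall N : nat, exists n : nat, (1 <= n)%nat /\ (N <= n)%nat /\ cf_AP x n (nu n).

(** diameter of a subset of R (m_infty for the empty set, p_infty if unbounded) *)
Definition diam (U : R -> Prop) : Rbar :=
  Rbar_lub (fun t => exists x y, U x /\ U y /\ t = Finite (Rabs (x - y))).

Definition rpow (d s : R) : R :=
  if Req_EM_T s 0 then 1 else if Req_EM_T d 0 then 0 else Rpower d s.

(** |U|^s, with |empty|^s = 0 (only used for sets of finite diameter) *)
Definition hterm (s : R) (U : R -> Prop) : R :=
  match diam U with Finite d => rpow d s | _ => 0 end.

Definition cover_sum (s : R) (U : nat -> R -> Prop) : Rbar :=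
  Rbar_lub (fun t => exists n, t = Finite (sum_n (fun i => hterm s (U i)) n)).

Definition hausdorff_delta (s delta : R) (E : R -> Prop) : Rbar :=
  Rbar_glb (fun t => exists U : nat -> R -> Prop,
    (forall x, E x -> exists i, U i x) /\
    (forall i, Rbar_le (diam (U i)) (Finite delta)) /\
    t = cover_sum s U).

(** s-dimensional Hausdorff measure: H^s(E) = lim_(delta -> 0+) H^s_delta(E)
    = sup_(delta > 0) H^s_delta(E) *)
Definition hausdorff_measure (s : R) (E : R -> Prop) : Rbar :=
  Rbar_lub (fun t => exists delta, 0 < delta /\ t = hausdorff_delta s delta E).

Definition hausdorff_dim (E : R -> Prop) : Rbar :=
  Rbar_glb (fun t => exists s, 0 <= s /\ t = Finite s /\
                              hausdorff_measure s E = Finite 0).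

Definition dim_bound (alpha : Rbar) : R :=
  match alpha with
  | Finite a => 1 / (2 * (1 + a))
  | p_infty => 0
  | m_infty => 0
  end.

(* Fix [s < 1 / (2 (1 + alpha))] and a large exponent [M]. Choose sparse positions [n_j]
   where [nu n_j / n_j] is close to [alpha] and fill [n_j, n_j + nu n_j] with consecutive
   digits; at every other (free) position [i], choose the digit among [i^M] values spaced by 2
   and increasing with [i]. Reading [t] in [[0, 1)] in the mixed radix given by the numbers of
   choices defines a map [g] into [F]. If the radix expansions of [t] and [t'] first differ at
   position [k + 1], then [|t - t'| <= 1 / D_k] with [D_k = prod_(free i <= k) i^M], whereas
   [|g t - g t'| >= prod_(i <= k + 1) B_i^-2] where [B_i ~ i^(M+1)] bounds the [i]-th digit.
   The free positions are at least a proportion [~ 1 / (1 + alpha)] of [1..k] (the worst case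
   being the end of a block), so [prod_(i <= k + 1) B_i^-2s >= e^-C / D_k] and [g] is inverse
   [s]-Hölder. An inverse [s]-Hölder image of an interval has positive [s]-dimensional
   Hausdorff measure. *)

From Stdlib Require Import Reals QArith ZArith Lra Lia List Wf_nat Classical ClassicalEpsilon.
From Coquelicot Require Import Coquelicot.
Open Scope R_scope.

(** * Hausdorff measure of inverse Hölder images *)

Lemma Rbar_lub_ub (E : Rbar -> Prop) x : E x -> Rbar_le x (Rbar_lub E).
Proof. intro Hx. exact (proj1 (proj2_sig (Rbar_ex_lub E)) x Hx). Qed.

Lemma Rbar_glb_greatest (E : Rbar -> Prop) b :
  (forall x, E x -> Rbar_le b x) -> Rbar_le b (Rbar_glb E).
Proof. intro Hb. exact (proj2 (proj2_sig (Rbar_ex_glb E)) b Hb). Qed.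

Section IntervalCover.

Variables p r : nat -> R.
Hypothesis r_ge0 : forall i, 0 <= r i.

Definition cover_length (l : list nat) : R :=
  fold_right (fun i acc => 2 * r i + acc) 0 l.

Lemma cover_length_ge0 l : 0 <= cover_length l.
Proof. induction l as [|i l IH]; simpl; [lra | pose proof (r_ge0 i); lra]. Qed.

Lemma cover_length_remove j l :
  In j l -> cover_length (remove Nat.eq_dec j l) + 2 * r j <= cover_length l.
Proof.
  induction l as [|i l IH]; intro Hj; [destruct Hj|]; simpl.
  destruct (Nat.eq_dec j i) as [<-|Hne].
  - destruct (in_dec Nat.eq_dec j l) as [Hin|Hout].
    + pose proof (IH Hin); pose proof (r_ge0 j); lra.
    + rewrite notin_remove by exact Hout; lra.
  - destruct Hj as [Hj|Hj]; [congruence|]. simpl. pose proof (IH Hj); lra.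
Qed.

(* Remove the interval containing the right end point [x]: the rest covers [0, p j - r j]. *)
Lemma interval_le_cover_length n : forall (l : list nat) x,
  (length l <= n)%nat -> 0 <= x ->
  (forall t, 0 <= t <= x -> exists i, In i l /\ Rabs (t - p i) < r i) ->
  x <= cover_length l.
Proof.
  induction n as [|n IH]; intros l x Hlen Hx Hcov;
    destruct (Hcov x ltac:(lra)) as [j [Hj Hxj]]; apply Rabs_def2 in Hxj.
  - destruct l; [destruct Hj | simpl in Hlen; lia].
  - pose proof (cover_length_remove j l Hj).
    pose proof (cover_length_ge0 (remove Nat.eq_dec j l)).
    destruct (Rle_dec (p j - r j) 0) as [Hle|Hgt]; [lra|].
    enough (p j - r j <= cover_length (remove Nat.eq_dec j l)) by lra.
    apply IH; [pose proof (remove_length_lt Nat.eq_dec l j Hj); lia | lra |].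
    intros t Ht. destruct (Hcov t ltac:(lra)) as [i [Hi Hti]].
    exists i. split; [|exact Hti]. apply in_in_remove; [|exact Hi].
    intros ->. apply Rabs_def2 in Hti. lra.
Qed.

(* Heine-Borel for [0, b], via the supremum of the x such that [0, x] has a finite subcover. *)
Lemma interval_finite_subcover b : 0 <= b ->
  (forall t, 0 <= t <= b -> exists i, Rabs (t - p i) < r i) ->
  exists n, forall t, 0 <= t <= b -> exists i, (i <= n)%nat /\ Rabs (t - p i) < r i.
Proof.
  intros Hb Hcov.
  set (E := fun x => 0 <= x <= b /\ exists n, forall t, 0 <= t <= x ->
                    exists i, (i <= n)%nat /\ Rabs (t - p i) < r i).
  assert (E0 : E 0).
  { split; [lra|]. destruct (Hcov 0 ltac:(lra)) as [i Hi].
    exists i. intros t Ht. exists i. replace t with 0 by lra. auto. }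
  destruct (completeness E (ex_intro _ b (fun x Ex => proj2 (proj1 Ex))) (ex_intro _ 0 E0))
    as [c [Hub Hleast]].
  assert (Hc : 0 <= c <= b) by (split; [apply Hub, E0 | apply Hleast; intros x Ex; apply Ex]).
  destruct (Hcov c Hc) as [j Hj].
  set (d := r j - Rabs (c - p j)).
  assert (Hd : 0 < d) by (unfold d; lra).
  assert (Hx : exists x, E x /\ c - d < x).
  { apply NNPP. intro Hno.
    enough (c <= c - d) by lra.
    apply Hleast. intros x Ex. apply Rnot_lt_le. intro Hlt. apply Hno. eauto. }
  destruct Hx as [x [[Hx [n Hn]] Hxc]].
  set (y := Rmin b (c + d / 2)).
  assert (Ey : E y).
  { split; [unfold y; split; [apply Rmin_glb; lra | apply Rmin_l]|].
    exists (Nat.max n j). intros t Ht.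
    destruct (Rle_dec t x) as [Htx|Htx].
    - destruct (Hn t ltac:(lra)) as [i [Hi1 Hi2]]. exists i. split; [lia | exact Hi2].
    - exists j. split; [lia|].
      pose proof (Rmin_r b (c + d / 2)).
      pose proof (Rabs_triang (t - c) (c - p j)).
      replace (t - c + (c - p j)) with (t - p j) in * by ring.
      assert (Rabs (t - c) < d) by (apply Rabs_def1; unfold y in Ht; lra).
      unfold d in *. lra. }
  assert (Hyb : y = b) by (pose proof (Hub y Ey); unfold y in *; unfold Rmin in *;
                     destruct (Rle_dec b (c + d / 2)); lra).
  destruct Ey as [_ [m Hm]]. exists m. rewrite <- Hyb. exact Hm.
Qed.

Lemma cover_length_seq n : cover_length (seq 0 (S n)) = 2 * sum_n r n.
Proof.
  assert (Happ : forall l c,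
    fold_right (fun i acc => 2 * r i + acc) c l = cover_length l + c).
  { induction l as [|i l IH]; intro c; simpl; [ring | rewrite IH; ring]. }
  induction n as [|n IH].
  - rewrite sum_O. simpl. ring.
  - rewrite seq_S, sum_Sn. unfold cover_length in *. rewrite fold_right_app, Happ, IH.
    simpl. change (plus (sum_n r n) (r (S n))) with (sum_n r n + r (S n)). ring.
Qed.

Lemma interval_le_cover_sum b : 0 <= b ->
  (forall t, 0 <= t <= b -> exists i, Rabs (t - p i) < r i) ->
  exists n, b <= 2 * sum_n r n.
Proof.
  intros Hb Hcov. destruct (interval_finite_subcover b Hb Hcov) as [n Hn].
  exists n. rewrite <- cover_length_seq.
  apply (interval_le_cover_length (length (seq 0 (S n)))); auto.
  intros t Ht. destruct (Hn t Ht) as [i [Hi1 Hi2]].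
  exists i. split; [apply in_seq; lia | exact Hi2].
Qed.

End IntervalCover.

Lemma rpow_ge0 d s : 0 <= rpow d s.
Proof.
  unfold rpow. destruct (Req_EM_T s 0); [lra|].
  destruct (Req_EM_T d 0); [lra | left; apply exp_pos].
Qed.

Lemma rpow_le_compat x y s : 0 <= s -> 0 <= x <= y -> rpow x s <= rpow y s.
Proof.
  intros Hs Hxy. unfold rpow. destruct (Req_EM_T s 0); [lra|].
  destruct (Req_EM_T x 0), (Req_EM_T y 0); try lra.
  - left; apply exp_pos.
  - apply Rle_Rpower_l; lra.
Qed.

Lemma hterm_ge0 s U : 0 <= hterm s U.
Proof. unfold hterm. destruct (diam U); [apply rpow_ge0 | lra | lra]. Qed.

Lemma rpow_dist_le_hterm s (U : R -> Prop) x y : 0 <= s -> U x -> U y ->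
  Rbar_le (diam U) (Finite 1) -> rpow (Rabs (x - y)) s <= hterm s U.
Proof.
  intros Hs Hx Hy Hdiam.
  assert (Hxy : Rbar_le (Finite (Rabs (x - y))) (diam U))
    by (apply Rbar_lub_ub; exists x, y; auto).
  unfold hterm. destruct (diam U) as [d| |]; simpl in *; try tauto.
  apply rpow_le_compat; [exact Hs | split; [apply Rabs_pos | exact Hxy]].
Qed.

Lemma hausdorff_null_small_cover s E eps : 0 < eps ->
  hausdorff_measure s E = Finite 0 ->
  exists U : nat -> R -> Prop, (forall x, E x -> exists i, U i x) /\
    (forall i, Rbar_le (diam (U i)) (Finite 1)) /\
    (forall n, sum_n (fun i => hterm s (U i)) n <= eps).
Proof.
  intros Heps Hnull.
  assert (Hdelta : Rbar_le (hausdorff_delta s 1 E) (Finite 0)).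
  { rewrite <- Hnull. apply Rbar_lub_ub. exists 1. split; [lra | reflexivity]. }
  apply NNPP. intro Hno.
  enough (Hge : Rbar_le (Finite eps) (hausdorff_delta s 1 E))
    by (pose proof (Rbar_le_trans _ _ _ Hge Hdelta); simpl in *; lra).
  apply Rbar_glb_greatest. intros x [U [Hcov [Hdiam ->]]].
  apply Rbar_not_lt_le. intro Hlt. apply Hno. exists U. repeat split; auto.
  intro n. enough (Rbar_le (Finite (sum_n (fun i => hterm s (U i)) n)) (cover_sum s U))
    by (destruct (cover_sum s U); simpl in *; lra).
  apply Rbar_lub_ub. exists n. reflexivity.
Qed.

Lemma sum_n_half_pow n : sum_n (fun i => (/ 2) ^ S i) n = 1 - (/ 2) ^ S n.
Proof.
  induction n as [|n IH].
  - rewrite sum_O. simpl. lra.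
  - rewrite sum_Sn, IH. change (plus ?a ?b) with (a + b). simpl. lra.
Qed.

Lemma sum_n_lin (a b : R) (u v : nat -> R) n :
  sum_n (fun i => a * u i + b * v i) n = a * sum_n u n + b * sum_n v n.
Proof.
  induction n as [|n IH]; [rewrite !sum_O; reflexivity|].
  rewrite !sum_Sn, IH. change (plus ?x ?y) with (x + y). lra.
Qed.

(* Covering [g U_i] gives intervals around points of [g^-1 U_i] of length about [K |U_i|^s],
   so a cover of small [s]-sum would cover [0, b] by intervals of total length [< b]. *)
Lemma hausdorff_measure_neq0_of_inverse_holder (E : R -> Prop) (g : R -> R) (b K s : R) :
  0 < b -> 0 < K -> 0 <= s ->
  (forall t, 0 <= t <= b -> E (g t)) ->
  (forall t t', 0 <= t <= b -> 0 <= t' <= b ->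
     Rabs (t - t') <= K * rpow (Rabs (g t - g t')) s) ->
  hausdorff_measure s E <> Finite 0.
Proof.
  intros Hb HK Hs HE Hholder H0.
  destruct (hausdorff_null_small_cover s E (b / (4 * K)) ltac:(apply Rdiv_lt_0_compat; lra) H0)
    as [U [Hcov [Hdiam Hsum]]].
  set (p := fun i => epsilon (inhabits 0) (fun t => 0 <= t <= b /\ U i (g t))).
  set (r := fun i => K * hterm s (U i) + b / 4 * (/ 2) ^ S i).
  assert (Hhalf : forall i, 0 < (/ 2) ^ i) by (intro i; apply pow_lt; lra).
  assert (Hr : forall i, 0 <= r i)
    by (intro i; pose proof (hterm_ge0 s (U i)); pose proof (Hhalf (S i)); unfold r; nra).
  assert (Hc : forall t, 0 <= t <= b -> exists i, Rabs (t - p i) < r i).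
  { intros t Ht. destruct (Hcov (g t) (HE t Ht)) as [i Hi]. exists i.
    assert (Hp : 0 <= p i <= b /\ U i (g (p i))) by (apply epsilon_spec; eauto).
    pose proof (rpow_dist_le_hterm s (U i) _ _ Hs Hi (proj2 Hp) (Hdiam i)).
    pose proof (Hholder t (p i) Ht (proj1 Hp)). pose proof (Hhalf (S i)).
    unfold r. nra. }
  destruct (interval_le_cover_sum p r Hr b ltac:(lra) Hc) as [n Hn].
  unfold r in Hn. rewrite sum_n_lin, sum_n_half_pow in Hn.
  pose proof (Hsum n). pose proof (Hhalf (S n)).
  assert (K * sum_n (fun i => hterm s (U i)) n <= K * (b / (4 * K)))
    by (apply Rmult_le_compat_l; lra).
  replace (K * (b / (4 * K))) with (b / 4) in * by (field; lra).
  assert (0 < b / 4 * (/ 2) ^ S n) by (apply Rmult_lt_0_compat; lra).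
  lra.
Qed.

(** * Continued fractions with prescribed digits *)

Lemma INR_ge2 (a : nat) : (2 <= a)%nat -> 2 <= INR a.
Proof. intro H. apply le_INR in H. simpl in H. lra. Qed.

Lemma Int_part_IZR_add (z : Z) (r : R) : 0 <= r < 1 -> Int_part (IZR z + r) = z.
Proof.
  intro Hr. symmetry. apply Int_part_spec. lra.
Qed.

Definition cf_inv (a : nat) (y : R) : R := / (INR a + y).

Lemma cf_inv_bounds a y : (2 <= a)%nat -> 0 <= y -> 0 < cf_inv a y <= / 2.
Proof.
  intros Ha Hy. pose proof (INR_ge2 a Ha). unfold cf_inv.
  split; [apply Rinv_0_lt_compat | apply Rinv_le_contravar]; lra.
Qed.

Lemma Rabs_cf_inv_sub a u v : (2 <= a)%nat -> 0 <= u -> 0 <= v ->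
  Rabs (cf_inv a u - cf_inv a v) = Rabs (u - v) / ((INR a + u) * (INR a + v)).
Proof.
  intros Ha Hu Hv. pose proof (INR_ge2 a Ha).
  replace (cf_inv a u - cf_inv a v) with ((v - u) / ((INR a + u) * (INR a + v)))
    by (unfold cf_inv; field; lra).
  unfold Rdiv. rewrite Rabs_mult, Rabs_inv, Rabs_minus_sym.
  rewrite (Rabs_pos_eq (_ * _)) by (apply Rmult_le_pos; lra). reflexivity.
Qed.

Lemma cf_inv_lipschitz a u v : (2 <= a)%nat -> 0 <= u -> 0 <= v ->
  Rabs (cf_inv a u - cf_inv a v) <= / 4 * Rabs (u - v).
Proof.
  intros Ha Hu Hv. pose proof (INR_ge2 a Ha). rewrite Rabs_cf_inv_sub by assumption.
  unfold Rdiv. rewrite Rmult_comm. apply Rmult_le_compat_r; [apply Rabs_pos|].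
  apply Rinv_le_contravar; nra.
Qed.

Lemma cf_inv_sub_lower a u v (B : R) : (2 <= a)%nat -> 0 <= u <= 1 -> 0 <= v <= 1 ->
  INR a + 1 <= B -> / (B * B) * Rabs (u - v) <= Rabs (cf_inv a u - cf_inv a v).
Proof.
  intros Ha Hu Hv HB. pose proof (INR_ge2 a Ha). rewrite Rabs_cf_inv_sub by (assumption || lra).
  unfold Rdiv. rewrite Rmult_comm. apply Rmult_le_compat_l; [apply Rabs_pos|].
  apply Rinv_le_contravar; [nra | apply Rmult_le_compat; lra].
Qed.

Section ContinuedFraction.

Variable a : nat -> nat.
Hypothesis a_ge2 : forall i, (2 <= a i)%nat.

(* [cf_approx n m = [0; a_(n+1), ..., a_(n+m)]], so that [cf_tail n = T^n (cf_tail 0)]. *)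
Fixpoint cf_approx (n m : nat) : R :=
  match m with
  | O => 0
  | S m' => cf_inv (a (S n)) (cf_approx (S n) m')
  end.

Definition cf_tail (n : nat) : R := real (Lim_seq (cf_approx n)).

Lemma cf_approx_bounds n m : 0 <= cf_approx n m <= / 2.
Proof.
  revert n; induction m as [|m IH]; intro n; simpl; [lra|].
  pose proof (cf_inv_bounds (a (S n)) (cf_approx (S n) m) (a_ge2 _) (proj1 (IH (S n)))).
  lra.
Qed.

Lemma cf_approx_cauchy m p n : Rabs (cf_approx n m - cf_approx n (m + p)) <= (/ 4) ^ m.
Proof.
  revert n; induction m as [|m IH]; intro n; simpl.
  - pose proof (cf_approx_bounds n p). rewrite Rabs_left1; lra.
  - pose proof (cf_approx_bounds (S n) m). pose proof (cf_approx_bounds (S n) (m + p)).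
    eapply Rle_trans; [apply cf_inv_lipschitz; auto; lra|].
    apply Rmult_le_compat_l; [lra | apply IH].
Qed.

Lemma ex_finite_lim_cf_approx n : ex_finite_lim_seq (cf_approx n).
Proof.
  apply ex_lim_seq_cauchy_corr. intro eps.
  destruct (pow_lt_1_zero (/ 4) ltac:(rewrite Rabs_pos_eq; lra) eps (cond_pos eps)) as [N HN].
  exists N.
  assert (Hsmall : forall k, (N <= k)%nat -> (/ 4) ^ k < eps).
  { intros k Hk. specialize (HN k Hk). rewrite Rabs_pos_eq in HN; [exact HN|].
    apply pow_le. lra. }
  intros i j Hi Hj. destruct (le_lt_dec i j).
  - replace j with (i + (j - i))%nat by lia.
    eapply Rle_lt_trans; [apply cf_approx_cauchy | apply Hsmall; exact Hi].
  - replace i with (j + (i - j))%nat by lia. rewrite Rabs_minus_sym.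
    eapply Rle_lt_trans; [apply cf_approx_cauchy | apply Hsmall; exact Hj].
Qed.

Lemma is_lim_cf_tail n : is_lim_seq (cf_approx n) (cf_tail n).
Proof.
  destruct (ex_finite_lim_cf_approx n) as [l Hl]. unfold cf_tail.
  rewrite (is_lim_seq_unique _ _ Hl). exact Hl.
Qed.

Lemma cf_tail_bounds n : 0 <= cf_tail n <= / 2.
Proof.
  pose proof (is_lim_cf_tail n) as H. split.
  - apply (is_lim_seq_le (fun _ => 0) (cf_approx n) 0 (cf_tail n));
      [intro k; apply cf_approx_bounds | apply is_lim_seq_const | exact H].
  - apply (is_lim_seq_le (cf_approx n) (fun _ => / 2) (cf_tail n) (/ 2));
      [intro k; apply cf_approx_bounds | exact H | apply is_lim_seq_const].
Qed.

Lemma cf_tail_succ n : cf_tail n = cf_inv (a (S n)) (cf_tail (S n)).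
Proof.
  assert (Hlim : is_lim_seq (fun m => cf_approx n (S m)) (cf_inv (a (S n)) (cf_tail (S n)))).
  { apply is_lim_seq_spec. intro eps.
    destruct (proj2 (is_lim_seq_spec _ _) (is_lim_cf_tail (S n)) eps) as [N HN].
    exists N. intros k Hk. simpl.
    pose proof (cf_approx_bounds (S n) k). pose proof (cf_tail_bounds (S n)).
    eapply Rle_lt_trans; [apply cf_inv_lipschitz; auto; lra|].
    pose proof (HN k Hk). pose proof (Rabs_pos (cf_approx (S n) k - cf_tail (S n))). lra. }
  apply (is_lim_seq_incr_1 (cf_approx n)), is_lim_seq_unique in Hlim.
  unfold cf_tail at 1. rewrite Hlim. reflexivity.
Qed.

Lemma cf_tail_pos n : 0 < cf_tail n.
Proof.
  rewrite cf_tail_succ. apply cf_inv_bounds; [apply a_ge2 | apply cf_tail_bounds].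
Qed.

Lemma inv_cf_tail n : / cf_tail n = INR (a (S n)) + cf_tail (S n).
Proof. rewrite cf_tail_succ at 1. unfold cf_inv. apply Rinv_inv. Qed.

Lemma gauss_cf_tail n : gauss (cf_tail n) = cf_tail (S n).
Proof.
  pose proof (cf_tail_bounds (S n)).
  unfold gauss. rewrite inv_cf_tail, INR_IZR_INZ, Int_part_IZR_add by lra. ring.
Qed.

Lemma iter_gauss_cf_tail k : Nat.iter k gauss (cf_tail 0) = cf_tail k.
Proof. induction k as [|k IH]; [reflexivity | simpl; rewrite IH; apply gauss_cf_tail]. Qed.

Lemma cf_digit_cf_tail n : (1 <= n)%nat -> cf_digit (cf_tail 0) n = a n.
Proof.
  intro Hn. pose proof (cf_tail_bounds n).
  unfold cf_digit. rewrite iter_gauss_cf_tail, inv_cf_tail.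
  replace (S (n - 1)) with n by lia.
  rewrite INR_IZR_INZ, Int_part_IZR_add by lra. apply Nat2Z.id.
Qed.

(* Descent: [cf_tail n = p / q] forces [0 < p < q] and [cf_tail (S n) = (q - a_(n+1) p) / p]. *)
Lemma cf_tail_mul_not_integer (q : nat) : forall n (p : Z),
  (0 < q)%nat -> cf_tail n * INR q <> IZR p.
Proof.
  induction q as [q IH] using lt_wf_ind. intros n p Hq Hp.
  pose proof (cf_tail_pos n). pose proof (cf_tail_bounds n).
  assert (Hq' : 0 < INR q) by (apply lt_0_INR; exact Hq).
  assert (Hp0 : (0 < p)%Z) by (apply lt_IZR; rewrite <- Hp; nra).
  assert (Hpq : (p < Z.of_nat q)%Z) by (apply lt_IZR; rewrite <- Hp, <- INR_IZR_INZ; nra).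
  apply (IH (Z.to_nat p) ltac:(lia) (S n) (Z.of_nat q - Z.of_nat (a (S n)) * p)%Z
           ltac:(lia)).
  replace (cf_tail (S n)) with (/ cf_tail n - INR (a (S n))) by (rewrite inv_cf_tail; ring).
  rewrite (INR_IZR_INZ (Z.to_nat p)), Z2Nat.id, minus_IZR, mult_IZR, <- Hp, <- !INR_IZR_INZ by lia.
  field. lra.
Qed.

Lemma cf_tail_irrational : irrational (cf_tail 0).
Proof.
  intros [[num den] Hq]. unfold Q2R in Hq. simpl in Hq.
  apply (cf_tail_mul_not_integer (Pos.to_nat den) 0 num); [lia|].
  rewrite INR_IZR_INZ, positive_nat_Z, Hq. field. apply not_0_IZR. lia.
Qed.

End ContinuedFraction.

Fixpoint prod_range (f : nat -> R) (j d : nat) : R :=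
  match d with O => 1 | S d' => f (S j) * prod_range f (S j) d' end.

Lemma prod_range_pos f j d : (forall i, (j < i)%nat -> 0 < f i) -> 0 < prod_range f j d.
Proof.
  revert j; induction d as [|d IH]; intros j Hf; simpl; [lra|].
  apply Rmult_lt_0_compat; [apply Hf; lia | apply IH; intros i Hi; apply Hf; lia].
Qed.

Lemma prod_range_succ f j d : prod_range f j (S d) = prod_range f j d * f (S (j + d)).
Proof.
  revert j; induction d as [|d IH]; intro j; [simpl; rewrite Nat.add_0_r; ring|].
  change (prod_range f j (S (S d))) with (f (S j) * prod_range f (S j) (S d)).
  rewrite IH. simpl. replace (S (j + S d)) with (S (S (j + d))) by lia. ring.
Qed.

Fixpoint sum_ln (B : nat -> R) (n : nat) : R :=
  match n with O => 0 | S n' => sum_ln B n' + ln (B (S n')) end.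

Lemma ln_prod_range_inv_sqr (B : nat -> R) k : (forall i, 0 < B i) ->
  ln (prod_range (fun i => / (B i * B i)) 0 k) = -2 * sum_ln B k.
Proof.
  intro HB. assert (HB2 : forall i, 0 < B i * B i) by (intro i; apply Rmult_lt_0_compat; apply HB).
  induction k as [|k IH]; [simpl; rewrite ln_1; ring|].
  rewrite prod_range_succ. simpl.
  rewrite ln_mult, IH, ln_Rinv, ln_mult by
    (try apply prod_range_pos; intros; try apply Rinv_0_lt_compat; auto).
  ring.
Qed.

Section ContinuedFractionDistance.

Variables a b : nat -> nat.
Hypothesis a_ge2 : forall i, (2 <= a i)%nat.
Hypothesis b_ge2 : forall i, (2 <= b i)%nat.

Lemma cf_tail_dist_common_prefix (B : nat -> R)
  (HB : forall i, (1 <= i)%nat -> INR (a i) + 1 <= B i) d : forall j,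
  (forall i, (j < i <= j + d)%nat -> a i = b i) ->
  prod_range (fun i => / (B i * B i)) j d * Rabs (cf_tail a (j + d) - cf_tail b (j + d))
    <= Rabs (cf_tail a j - cf_tail b j).
Proof.
  induction d as [|d IH]; intros j Hab; simpl.
  - rewrite Nat.add_0_r. lra.
  - rewrite (cf_tail_succ a a_ge2 j), (cf_tail_succ b b_ge2 j), <- (Hab (S j)) by lia.
    pose proof (cf_tail_bounds a a_ge2 (S j)). pose proof (cf_tail_bounds b b_ge2 (S j)).
    pose proof (HB (S j) ltac:(lia)). pose proof (INR_ge2 _ (a_ge2 (S j))).
    eapply Rle_trans; [|apply cf_inv_sub_lower with (B := B (S j)); auto; lra].
    rewrite Rmult_assoc. apply Rmult_le_compat_l.
    + left. apply Rinv_0_lt_compat. nra.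
    + replace (j + S d)%nat with (S j + d)%nat by lia.
      apply IH. intros i Hi. apply Hab. lia.
Qed.

Lemma cf_tail_dist_digit_gap k (Bk : R) :
  (a (S k) + 2 <= b (S k))%nat -> INR (b (S k)) + 1 <= Bk ->
  / (Bk * Bk) <= Rabs (cf_tail a k - cf_tail b k).
Proof.
  intros Hgap HB.
  rewrite (cf_tail_succ a a_ge2 k), (cf_tail_succ b b_ge2 k).
  pose proof (cf_tail_bounds a a_ge2 (S k)). pose proof (cf_tail_bounds b b_ge2 (S k)).
  pose proof (INR_ge2 _ (a_ge2 (S k))).
  apply le_INR in Hgap. rewrite plus_INR in Hgap. simpl in Hgap.
  unfold cf_inv.
  set (x := INR (a (S k))) in *. set (y := INR (b (S k))) in *.
  set (u := cf_tail a (S k)) in *. set (v := cf_tail b (S k)) in *.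
  assert (/ (x + 1) <= / (x + u)) by (apply Rinv_le_contravar; lra).
  assert (/ (y + v) <= / (x + 2)) by (apply Rinv_le_contravar; lra).
  assert (/ (Bk * Bk) <= / (x + 1) - / (x + 2)).
  { replace (/ (x + 1) - / (x + 2)) with (/ ((x + 1) * (x + 2))) by (field; lra).
    apply Rinv_le_contravar; [nra | apply Rmult_le_compat; lra]. }
  assert (0 < / (Bk * Bk)) by (apply Rinv_0_lt_compat; nra).
  rewrite Rabs_pos_eq; lra.
Qed.

End ContinuedFractionDistance.

Lemma cf_tail0_dist_lower a b (a_ge2 : forall i, (2 <= a i)%nat)
  (b_ge2 : forall i, (2 <= b i)%nat) (B : nat -> R)
  (HBa : forall i, (1 <= i)%nat -> INR (a i) + 1 <= B i)
  (HBb : forall i, (1 <= i)%nat -> INR (b i) + 1 <= B i) k :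
  (forall i, (0 < i <= k)%nat -> a i = b i) ->
  (a (S k) + 2 <= b (S k) \/ b (S k) + 2 <= a (S k))%nat ->
  prod_range (fun i => / (B i * B i)) 0 (S k) <= Rabs (cf_tail a 0 - cf_tail b 0).
Proof.
  intros Hab Hgap. rewrite prod_range_succ.
  assert (0 <= prod_range (fun i => / (B i * B i)) 0 k).
  { left. apply prod_range_pos. intros i Hi. pose proof (HBa i Hi).
    pose proof (INR_ge2 _ (a_ge2 i)). apply Rinv_0_lt_compat. nra. }
  destruct Hgap as [Hgap|Hgap].
  - eapply Rle_trans; [|apply (cf_tail_dist_common_prefix a b a_ge2 b_ge2 B HBa k 0);
                        intros; apply Hab; lia].
    apply Rmult_le_compat_l; [assumption|].
    apply cf_tail_dist_digit_gap; auto. apply HBb. lia.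
  - rewrite Rabs_minus_sym.
    eapply Rle_trans; [|apply (cf_tail_dist_common_prefix b a b_ge2 a_ge2 B HBb k 0);
                        intros; symmetry; apply Hab; lia].
    apply Rmult_le_compat_l; [assumption|].
    apply cf_tail_dist_digit_gap; auto. apply HBa. lia.
Qed.

(** * Sums of logarithms *)

Lemma exp_le x y : x <= y -> exp x <= exp y.
Proof. intros [Hlt | ->]; [left; apply exp_increasing, Hlt | right; reflexivity]. Qed.

Lemma ln_le x y : 0 < x -> x <= y -> ln x <= ln y.
Proof. intros Hx [Hlt | ->]; [left; apply ln_increasing; assumption | right; reflexivity]. Qed.

Lemma ln_ge0 x : 1 <= x -> 0 <= ln x.
Proof. intro Hx. rewrite <- ln_1. apply ln_le; lra. Qed.

Definition log1p (i : nat) : R := ln (INR i + 1).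

Fixpoint log1p_sum (k : nat) : R :=
  match k with O => 0 | S k' => log1p_sum k' + log1p (S k') end.

Lemma log1p_ge0 i : 0 <= log1p i.
Proof. unfold log1p. apply ln_ge0. pose proof (pos_INR i). lra. Qed.

Lemma log1p_mono i l : (i <= l)%nat -> log1p i <= log1p l.
Proof.
  intro H. apply le_INR in H. pose proof (pos_INR i). unfold log1p. apply ln_le; lra.
Qed.

Lemma log1p_succ_le i : log1p (S i) <= log1p i + ln 2.
Proof.
  unfold log1p. rewrite S_INR, <- ln_mult by (pose proof (pos_INR i); lra).
  pose proof (pos_INR i). apply ln_le; lra.
Qed.

Lemma log1p_unbounded (T : R) : exists k0, forall k, (k0 <= k)%nat -> T <= log1p k.
Proof.
  destruct (INR_unbounded (exp T)) as [k0 Hk0]. exists k0. intros k Hk.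
  apply le_INR in Hk. unfold log1p. rewrite <- (ln_exp T).
  apply ln_le; [apply exp_pos | lra].
Qed.

Lemma log1p_sum_ge0 k : 0 <= log1p_sum k.
Proof. induction k; simpl; [lra | pose proof (log1p_ge0 (S k)); lra]. Qed.

Lemma log1p_sum_mono k l : (k <= l)%nat -> log1p_sum k <= log1p_sum l.
Proof. induction 1; simpl; [lra | pose proof (log1p_ge0 (S m)); lra]. Qed.

Lemma log1p_sum_shift_le n d : log1p_sum (n + d) - log1p_sum n <= INR d * log1p (n + d).
Proof.
  induction d as [|d IH]; [rewrite Nat.add_0_r; simpl; lra|].
  replace (n + S d)%nat with (S (n + d)) by lia. simpl log1p_sum. rewrite S_INR.
  pose proof (log1p_mono (n + d) (S (n + d)) ltac:(lia)). pose proof (pos_INR d). nra.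
Qed.

Lemma log1p_sum_shift_ge r d : INR d * log1p (S r) <= log1p_sum (r + d) - log1p_sum r.
Proof.
  induction d as [|d IH]; [rewrite Nat.add_0_r; simpl; lra|].
  replace (r + S d)%nat with (S (r + d)) by lia. simpl log1p_sum. rewrite S_INR.
  pose proof (log1p_mono (S r) (S (r + d)) ltac:(lia)). lra.
Qed.

Lemma log1p_sum_le k : log1p_sum k <= INR k * log1p k.
Proof. pose proof (log1p_sum_shift_le 0 k). simpl in *. lra. Qed.

(* The last [n - n / M] terms are each at least [log1p (n / M + 1) >= log1p n - ln M]. *)
Lemma log1p_sum_lower (M n : nat) : (1 <= M)%nat -> ln (INR M) <= log1p n ->
  INR n * (1 - / INR M) * (log1p n - ln (INR M)) <= log1p_sum n.
Proof.
  intros HM Hx. assert (HMr : 1 <= INR M) by (apply (le_INR 1); exact HM).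
  set (r := (n / M)%nat).
  assert (Hr1 : (M * r <= n)%nat) by apply Nat.Div0.mul_div_le.
  assert (Hr2 : (n < M * S r)%nat).
  { pose proof (Nat.div_mod n M ltac:(lia)). pose proof (Nat.mod_upper_bound n M ltac:(lia)).
    unfold r. lia. }
  assert (Hlog : log1p n - ln (INR M) <= log1p (S r)).
  { assert (Hle : log1p n <= ln ((INR (S r) + 1) * INR M)).
    { apply lt_INR in Hr2. rewrite mult_INR, S_INR in *. pose proof (pos_INR n).
      unfold log1p. apply ln_le; nra. }
    rewrite ln_mult in Hle by (pose proof (pos_INR (S r)); lra). unfold log1p at 2. lra. }
  assert (Hnr : INR n * (1 - / INR M) <= INR (n - r)).
  { rewrite minus_INR by nia. apply le_INR in Hr1. rewrite mult_INR in Hr1.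
    enough (INR r <= INR n / INR M) by (unfold Rdiv in *; lra).
    apply (Rmult_le_reg_l (INR M)); [lra|].
    replace (INR M * (INR n / INR M)) with (INR n) by (field; lra). lra. }
  pose proof (log1p_sum_shift_ge r (n - r)). replace (r + (n - r))%nat with n in * by nia.
  pose proof (log1p_sum_ge0 r).
  apply Rle_trans with (INR (n - r) * (log1p n - ln (INR M))); [apply Rmult_le_compat_r; lra|].
  apply Rle_trans with (INR (n - r) * log1p (S r)); [apply Rmult_le_compat_l; [apply pos_INR | lra] | lra].
Qed.

(** * Coding by blocks and free digits *)

Lemma Int_part_bounds x : IZR (Int_part x) <= x < IZR (Int_part x) + 1.
Proof. pose proof (base_Int_part x). lra. Qed.

Lemma Int_part_mul_div (x : R) (N : nat) : (1 <= N)%nat ->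
  (Int_part (x * INR N) / Z.of_nat N)%Z = Int_part x.
Proof.
  intro HN. set (m := Int_part x). set (p := Int_part (x * INR N)).
  pose proof (Int_part_bounds x) as Hm. pose proof (Int_part_bounds (x * INR N)) as Hp.
  fold m in Hm. fold p in Hp.
  assert (HNr : 1 <= INR N) by (apply (le_INR 1); exact HN).
  rewrite INR_IZR_INZ in *.
  assert (H1 : (m * Z.of_nat N < p + 1)%Z) by (apply lt_IZR; rewrite mult_IZR, plus_IZR; nra).
  assert (H2 : (p < (m + 1) * Z.of_nat N)%Z) by (apply lt_IZR; rewrite mult_IZR, plus_IZR; nra).
  symmetry. apply (Z.div_unique p (Z.of_nat N) m (p - m * Z.of_nat N)); [left; lia | ring].
Qed.

Section Blocks.

Variables len bs : nat -> nat.
Hypothesis bs_0 : (1 <= bs 0)%nat.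
Hypothesis bs_succ : forall j, (bs j + len (bs j) < bs (S j))%nat.

Lemma block_end_lt_start j j' : (j < j')%nat -> (bs j + len (bs j) < bs j')%nat.
Proof. induction 1 as [|j' _ IH]; [apply bs_succ | pose proof (bs_succ j'); lia]. Qed.

Lemma block_start_ge j : (S j <= bs j)%nat.
Proof. induction j as [|j IH]; [exact bs_0 | pose proof (bs_succ j); lia]. Qed.

Lemma block_start_lt_inv j j' : (bs j < bs j')%nat -> (j < j')%nat.
Proof.
  intro H. destruct (lt_eq_lt_dec j j') as [[Hlt|Heq]|Hgt]; [exact Hlt | subst; lia |].
  pose proof (block_end_lt_start j' j Hgt). lia.
Qed.

(* The [j]-th block is [bs j, bs j + len (bs j)); [in_block i j] excludes its first position. *)
Definition in_block (i j : nat) : Prop := (bs j < i < bs j + len (bs j))%nat.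

Lemma in_block_unique i j j' : in_block i j -> in_block i j' -> j = j'.
Proof.
  unfold in_block. intros H1 H2. destruct (lt_eq_lt_dec j j') as [[Hlt|Heq]|Hgt];
    [pose proof (block_end_lt_start _ _ Hlt); lia | exact Heq |
     pose proof (block_end_lt_start _ _ Hgt); lia].
Qed.

Lemma block_start_not_in_block i j : ~ in_block (bs i) j.
Proof.
  unfold in_block. intros [H1 H2]. apply block_start_lt_inv in H1.
  pose proof (block_end_lt_start _ _ H1). lia.
Qed.

Definition in_blockb (i j : nat) : bool :=
  Nat.ltb (bs j) i && Nat.ltb i (bs j + len (bs j)).

Lemma in_blockP i j : in_blockb i j = true <-> in_block i j.
Proof. unfold in_blockb, in_block. rewrite Bool.andb_true_iff, !Nat.ltb_lt. tauto. Qed.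

Definition block_of (i : nat) : option nat := find (in_blockb i) (seq 0 i).

Lemma block_of_some i j : block_of i = Some j -> in_block i j.
Proof. intro H. apply find_some in H. apply in_blockP, H. Qed.

Lemma block_of_none i : block_of i = None -> forall j, ~ in_block i j.
Proof.
  intros H j Hj. pose proof (block_start_ge j).
  assert (Hin : In j (seq 0 i)) by (apply in_seq; unfold in_block in Hj; lia).
  pose proof (find_none _ _ H j Hin). apply in_blockP in Hj. congruence.
Qed.

Lemma block_of_in_block i j : in_block i j -> block_of i = Some j.
Proof.
  intro H. destruct (block_of i) as [j'|] eqn:E.
  - apply block_of_some in E. f_equal. eapply in_block_unique; eassumption.
  - exfalso. eapply block_of_none; eassumption.
Qed.

Lemma block_of_start j : block_of (bs j) = None.
Proof.
  destruct (block_of (bs j)) eqn:E; [|reflexivity].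
  apply block_of_some, block_start_not_in_block in E. contradiction.
Qed.

Section Coding.

Variable M : nat.
Hypothesis M_pos : (1 <= M)%nat.

Definition fan (i : nat) : nat := (i ^ M)%nat.

Lemma fan_pos i : (1 <= i)%nat -> (1 <= fan i)%nat.
Proof. intro Hi. unfold fan. rewrite <- (Nat.pow_1_l M). apply Nat.pow_le_mono_l, Hi. Qed.

(* At a free position [i] the digit is [digit_base i + 2 c] with a choice [c < fan i]; these
   ranges are increasing in [i], and distinct choices give digits at distance at least 2.
   In a block the digits go up by 1 from the digit chosen at its first position. *)
Fixpoint digit_base (i : nat) : nat :=
  match i with O => 2 | S i' => digit_base i' + 2 * fan i' end.

Definition free_choice (P : nat -> Z) (i : nat) : nat := Z.to_nat (P i mod Z.of_nat (fan i)).

Definition digits (P : nat -> Z) (i : nat) : nat :=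
  match block_of i with
  | Some j => digit_base (bs j) + 2 * free_choice P (bs j) + (i - bs j)
  | None => digit_base i + 2 * free_choice P i
  end.

Lemma digit_base_ge2 i : (2 <= digit_base i)%nat.
Proof. induction i; simpl; lia. Qed.

Lemma digit_base_add n d : (1 <= n)%nat -> (digit_base n + 2 * d <= digit_base (n + d))%nat.
Proof.
  intro Hn. induction d as [|d IH]; [rewrite !Nat.add_0_r; lia|].
  replace (n + S d)%nat with (S (n + d)) by lia. simpl.
  pose proof (fan_pos (n + d) ltac:(lia)). lia.
Qed.

Lemma digit_base_mono i l : (i <= l)%nat -> (digit_base i <= digit_base l)%nat.
Proof. induction 1; simpl; lia. Qed.

Lemma free_choice_lt P i : (1 <= i)%nat -> (free_choice P i < fan i)%nat.
Proof.
  intro Hi. unfold free_choice. pose proof (fan_pos i Hi).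
  pose proof (Z.mod_pos_bound (P i) (Z.of_nat (fan i)) ltac:(lia)). lia.
Qed.

Lemma digits_ge2 P i : (2 <= digits P i)%nat.
Proof.
  unfold digits. destruct (block_of i) as [j|];
    [pose proof (digit_base_ge2 (bs j)) | pose proof (digit_base_ge2 i)]; lia.
Qed.

Lemma digits_free P i : block_of i = None -> digits P i = (digit_base i + 2 * free_choice P i)%nat.
Proof. intro H. unfold digits. rewrite H. reflexivity. Qed.

Lemma digits_lt_base P i : (1 <= i)%nat -> (digits P i + 1 <= digit_base (S i))%nat.
Proof.
  intro Hi. unfold digits. destruct (block_of i) as [j|] eqn:E.
  - apply block_of_some in E. unfold in_block in E. set (n := bs j) in *.
    pose proof (block_start_ge j).
    pose proof (free_choice_lt P n ltac:(unfold n; lia)).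
    pose proof (digit_base_add (S n) (i - S n) ltac:(lia)).
    replace (S n + (i - S n))%nat with i in * by lia.
    pose proof (digit_base_mono i (S i) ltac:(lia)). simpl in *. lia.
  - pose proof (free_choice_lt P i Hi). simpl. lia.
Qed.

Lemma digits_increasing P i : (1 <= i)%nat -> (digits P i < digits P (S i))%nat.
Proof.
  intro Hi. destruct (block_of (S i)) as [j|] eqn:E.
  - pose proof (block_of_some _ _ E) as Hb. unfold in_block in Hb.
    unfold digits at 2. rewrite E.
    destruct (Nat.eq_dec (bs j) i) as [<-|Hne].
    + rewrite digits_free by apply block_of_start. lia.
    + unfold digits. rewrite (block_of_in_block i j) by (unfold in_block; lia). lia.
  - rewrite (digits_free P (S i) E). pose proof (digits_lt_base P i Hi). lia.
Qed.

Lemma digits_block P j r : (r < len (bs j))%nat ->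
  digits P (bs j + r) = (digit_base (bs j) + 2 * free_choice P (bs j) + r)%nat.
Proof.
  intro Hr. destruct r as [|r].
  - rewrite Nat.add_0_r, (digits_free P (bs j) (block_of_start j)). lia.
  - unfold digits. rewrite (block_of_in_block (bs j + S r) j) by (unfold in_block; lia). lia.
Qed.

Lemma digits_prefix P P' i : (forall l, (l <= i)%nat -> P l = P' l) -> digits P i = digits P' i.
Proof.
  intro H. unfold digits, free_choice. destruct (block_of i) eqn:E.
  - apply block_of_some in E. unfold in_block in E. rewrite H by lia. reflexivity.
  - rewrite H by lia. reflexivity.
Qed.

(* [t] in [[0, 1)] is read in the mixed radix [(radix i)_i]: its [i]-th mixed-radix digit is
   [free_choice (radix_floor t) i], and blocks carry no information. *)
Definition radix (i : nat) : nat := match block_of i with Some _ => 1 | None => fan i end.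

Fixpoint radix_prod (i : nat) : nat :=
  match i with O => 1 | S i' => radix_prod i' * radix (S i') end.

Definition radix_floor (t : R) (i : nat) : Z := Int_part (t * INR (radix_prod i)).

Definition coding (t : R) : R := cf_tail (digits (radix_floor t)) 0.

Lemma radix_pos i : (1 <= i)%nat -> (1 <= radix i)%nat.
Proof. intro Hi. unfold radix. destruct (block_of i); [lia | apply fan_pos, Hi]. Qed.

Lemma radix_prod_pos i : (1 <= radix_prod i)%nat.
Proof. induction i as [|i IH]; simpl; [lia | pose proof (radix_pos (S i) ltac:(lia)); nia]. Qed.

Lemma radix_prod_block_start j : (j < radix_prod (bs j))%nat.
Proof.
  pose proof (block_start_ge j). pose proof (block_of_start j).
  destruct (bs j) as [|n] eqn:E; [lia|].
  simpl. pose proof (radix_prod_pos n). unfold radix, fan.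
  rewrite H0. pose proof (Nat.pow_le_mono_r (S n) 1 M ltac:(lia) M_pos).
  rewrite Nat.pow_1_r in *. nia.
Qed.

Lemma radix_floor_succ t i : (radix_floor t (S i) / Z.of_nat (radix (S i)))%Z = radix_floor t i.
Proof.
  unfold radix_floor. simpl. rewrite mult_INR, <- Rmult_assoc.
  apply Int_part_mul_div, radix_pos. lia.
Qed.

Lemma radix_floor_0 t : 0 <= t < 1 -> radix_floor t 0 = 0%Z.
Proof. intro Ht. unfold radix_floor. simpl. symmetry. apply Int_part_spec. simpl. lra. Qed.

Lemma radix_floor_eq_dist t t' i :
  radix_floor t i = radix_floor t' i -> Rabs (t - t') < / INR (radix_prod i).
Proof.
  intro E. unfold radix_floor in E.
  pose proof (Int_part_bounds (t * INR (radix_prod i))).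
  pose proof (Int_part_bounds (t' * INR (radix_prod i))). rewrite E in *.
  assert (HD : 0 < INR (radix_prod i)) by (apply lt_0_INR; pose proof (radix_prod_pos i); lia).
  assert (Rabs ((t - t') * INR (radix_prod i)) < 1) by (apply Rabs_def1; nra).
  rewrite Rabs_mult, (Rabs_pos_eq (INR (radix_prod i))) in H1 by lra.
  apply (Rmult_lt_reg_r (INR (radix_prod i))); [exact HD|]. rewrite Rinv_l; lra.
Qed.

Lemma coding_in_F_set (nu : nat -> nat) : (forall n, len n = S (nu n)) ->
  forall t, F_set nu (coding t).
Proof.
  intros Hlen t. unfold coding. set (a := digits (radix_floor t)).
  assert (Ha : forall i, (2 <= a i)%nat) by apply digits_ge2.
  split; [split; [|split]|].
  - pose proof (cf_tail_pos a Ha 0). pose proof (cf_tail_bounds a Ha 0). lra.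
  - apply cf_tail_irrational, Ha.
  - intros n Hn. rewrite !cf_digit_cf_tail by (auto; lia).
    rewrite Nat.add_1_r. apply digits_increasing, Hn.
  - intro N. exists (bs N). pose proof (block_start_ge N). split; [lia | split; [lia|]].
    intros i Hi. rewrite <- Nat.lt_succ_r, <- Hlen in Hi.
    rewrite !cf_digit_cf_tail by (auto; lia).
    replace (bs N + i + 1)%nat with (bs N + (i + 1))%nat by lia.
    replace (bs N + i + 2)%nat with (bs N + (i + 2))%nat by lia.
    unfold a. rewrite !digits_block by lia. lia.
Qed.

(** * The counting estimate *)

Definition block_indicator (i : nat) : R := match block_of i with Some _ => 1 | None => 0 end.

Fixpoint block_log1p_sum (k : nat) : R :=
  match k with
  | O => 0
  | S k' => block_log1p_sum k' + block_indicator (S k') * log1p (S k')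
  end.

Lemma block_log1p_sum_le k : block_log1p_sum k <= log1p_sum k.
Proof.
  induction k as [|k IH]; simpl; [lra|].
  pose proof (log1p_ge0 (S k)). unfold block_indicator. destruct (block_of (S k)); lra.
Qed.

Lemma block_log1p_sum_in_block j d : (d < len (bs j))%nat ->
  block_log1p_sum (bs j + d) - block_log1p_sum (bs j) = log1p_sum (bs j + d) - log1p_sum (bs j).
Proof.
  induction d as [|d IH]; intro Hd; [rewrite Nat.add_0_r; ring|].
  replace (bs j + S d)%nat with (S (bs j + d)) by lia. simpl.
  unfold block_indicator. rewrite (block_of_in_block (S (bs j + d)) j) by (unfold in_block; lia).
  pose proof (IH ltac:(lia)). lra.
Qed.

Lemma block_log1p_sum_le_before k E :
  (forall i, (1 <= i <= k)%nat -> block_of i <> None -> (i < E)%nat) ->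
  block_log1p_sum k <= INR E * log1p k.
Proof.
  induction k as [|k IH]; intro HE; simpl.
  - pose proof (log1p_ge0 0). pose proof (pos_INR E). nra.
  - pose proof (log1p_mono k (S k) ltac:(lia)). pose proof (pos_INR E).
    unfold block_indicator. destruct (block_of (S k)) eqn:Eb.
    + assert (HkE : (S k < E)%nat) by (apply HE; [lia | congruence]).
      pose proof (block_log1p_sum_le k). pose proof (log1p_sum_le k). pose proof (log1p_ge0 k).
      apply lt_INR in HkE. rewrite S_INR in HkE. pose proof (pos_INR k). nra.
    + assert (block_log1p_sum k <= INR E * log1p k) by (apply IH; intros; apply HE; auto; lia).
      nra.
Qed.

Definition prev_block_end (j : nat) : nat :=
  match j with O => O | S j' => bs j' + len (bs j') end.

Lemma in_block_lt_prev_block_end j i :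
  (1 <= i <= bs j)%nat -> block_of i <> None -> (i < prev_block_end j)%nat.
Proof.
  intros Hi Hb. destruct (block_of i) as [j'|] eqn:E; [|congruence].
  apply block_of_some in E. unfold in_block in E.
  assert (Hjj : (j' < j)%nat) by (apply block_start_lt_inv; lia).
  destruct j as [|j]; [lia|]. simpl.
  destruct (Nat.eq_dec j' j) as [->|Hne]; [lia|].
  pose proof (block_end_lt_start j' j ltac:(lia)). lia.
Qed.

Definition digit_bound (i : nat) : R := INR (digit_base (S i)).

Lemma digit_bound_ge2 i : 2 <= digit_bound i.
Proof. apply INR_ge2, digit_base_ge2. Qed.

Lemma digit_base_le_pow i : (digit_base (S i) <= 2 * S i ^ S M)%nat.
Proof.
  induction i as [|i IH].
  { change (digit_base 1) with (2 + 2 * fan 0)%nat. unfold fan.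
    rewrite Nat.pow_0_l, Nat.pow_1_l by lia. lia. }
  change (digit_base (S (S i))) with (digit_base (S i) + 2 * fan (S i))%nat. unfold fan.
  pose proof (Nat.pow_le_mono_l (S i) (S (S i)) M ltac:(lia)).
  rewrite !Nat.pow_succ_r' in *. nia.
Qed.

Lemma ln_digit_bound_le i : (1 <= i)%nat -> ln (digit_bound i) <= (INR M + 2) * log1p i.
Proof.
  intro Hi. assert (Hi' : 1 <= INR i) by (apply (le_INR 1), Hi).
  assert (Hpow : digit_bound i <= 2 * (INR i + 1) ^ S M).
  { pose proof (digit_base_le_pow i) as H. apply le_INR in H.
    rewrite mult_INR, pow_INR, (S_INR i) in H. unfold digit_bound. simpl in H |- *. lra. }
  pose proof (digit_bound_ge2 i).
  eapply Rle_trans; [apply ln_le; [lra | exact Hpow]|].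
  rewrite ln_mult, ln_pow, S_INR by (try apply pow_lt; lra).
  assert (ln 2 <= log1p i) by (apply ln_le; lra).
  pose proof (log1p_ge0 i). unfold log1p in *. nra.
Qed.

Lemma sum_ln_digit_bound_le k : sum_ln digit_bound k <= (INR M + 2) * log1p_sum k.
Proof. induction k; simpl; [lra | pose proof (ln_digit_bound_le (S k) ltac:(lia)); lra]. Qed.

(* Free positions contribute [ln (i ^ M) >= M (log1p i - ln 2)] to [ln (radix_prod k)]. *)
Lemma ln_radix_prod_ge k :
  INR M * (log1p_sum k - block_log1p_sum k) - INR M * ln 2 * INR k <= ln (INR (radix_prod k)).
Proof.
  assert (HM : 1 <= INR M) by (apply (le_INR 1), M_pos).
  induction k as [|k IH]; [simpl; rewrite ln_1; lra|].
  change (radix_prod (S k)) with (radix_prod k * radix (S k))%nat.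
  pose proof (radix_prod_pos k). pose proof (radix_pos (S k) ltac:(lia)).
  rewrite mult_INR, ln_mult by (apply lt_0_INR; lia).
  simpl log1p_sum. simpl block_log1p_sum. rewrite S_INR. unfold block_indicator, radix.
  pose proof ln_lt_2. pose proof (log1p_succ_le k).
  destruct (block_of (S k)).
  - simpl INR. rewrite ln_1. nra.
  - unfold fan. rewrite pow_INR, ln_pow by (apply lt_0_INR; lia).
    assert (log1p (S k) <= ln 2 + ln (INR (S k))).
    { rewrite <- ln_mult by (try apply lt_0_INR; lia || lra).
      unfold log1p. rewrite S_INR. pose proof (pos_INR k). apply ln_le; lra. }
    nra.
Qed.

Section CountingGap.

Variables s beta : R.
Hypothesis s_ge0 : 0 <= s.
Hypothesis beta_ge0 : 0 <= beta.
Hypothesis M_large : 5 <= INR M * (1 - 2 * s * (1 + beta)).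
Hypothesis len_le : forall j, INR (len (bs j)) <= beta * INR (bs j).
Hypothesis bs_sparse : forall j, (M * prev_block_end j <= bs j)%nat.

Definition sigma : R := 2 * s * (INR M + 2).

Definition block_threshold : R :=
  INR M * ln (INR M) + sigma * beta * ln (1 + beta) + INR M * ln 2 * (1 + beta).

Hypothesis bs_large : forall j, block_threshold <= log1p (bs j).

(* [ln (radix_prod k) - 2 s sum_ln digit_bound (S k)] is at least this quantity. *)
Definition counting_gap (k : nat) : R :=
  (INR M - sigma) * log1p_sum k - INR M * block_log1p_sum k - sigma * log1p (S k)
  - INR M * ln 2 * INR k.

Lemma INR_M_ge1 : 1 <= INR M.
Proof. apply (le_INR 1), M_pos. Qed.

Lemma sigma_ge0 : 0 <= sigma.
Proof. pose proof INR_M_ge1. unfold sigma. nra. Qed.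

Lemma sigma_bound : 3 <= INR M - sigma.
Proof.
  pose proof INR_M_ge1. unfold sigma.
  assert (0 <= 2 * s * beta * (INR M + 2)) by (repeat apply Rmult_le_pos; lra).
  assert (2 * s * (1 + beta) < 1) by nra.
  nra.
Qed.

Lemma gap_factor_ge1 : 1 <= (INR M - sigma) * (1 - / INR M) - 1 - sigma * beta.
Proof.
  pose proof INR_M_ge1. pose proof sigma_bound.
  replace ((INR M - sigma) * (1 - / INR M)) with (INR M - sigma - 1 + sigma / INR M)
    by (field; lra).
  assert (0 <= sigma / INR M) by (apply Rdiv_le_0_compat; [apply sigma_ge0 | lra]).
  assert (sigma * (1 + beta) = 2 * s * (1 + beta) * (INR M + 2)) by (unfold sigma; ring).
  nra.
Qed.

Lemma block_threshold_ge : INR M * ln (INR M) <= block_threshold.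
Proof.
  pose proof INR_M_ge1. pose proof sigma_ge0. pose proof ln_lt_2.
  pose proof (ln_ge0 (1 + beta) ltac:(lra)).
  assert (0 <= sigma * beta * ln (1 + beta)) by (repeat apply Rmult_le_pos; lra).
  assert (0 <= INR M * ln 2 * (1 + beta)) by (repeat apply Rmult_le_pos; lra).
  unfold block_threshold. lra.
Qed.

Lemma block_log1p_sum_block_start j : INR M * block_log1p_sum (bs j) <= INR (bs j) * log1p (bs j).
Proof.
  pose proof (block_log1p_sum_le_before (bs j) (prev_block_end j) (in_block_lt_prev_block_end j)).
  pose proof (bs_sparse j) as Hsp. apply le_INR in Hsp. rewrite mult_INR in Hsp.
  pose proof (log1p_ge0 (bs j)). pose proof INR_M_ge1.
  apply Rle_trans with (INR M * (INR (prev_block_end j) * log1p (bs j)));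
    [apply Rmult_le_compat_l; lra|].
  rewrite <- Rmult_assoc. apply Rmult_le_compat_r; assumption.
Qed.

Lemma block_tail_le j d : (d < len (bs j))%nat ->
  log1p_sum (bs j + d) - log1p_sum (bs j) + log1p (S (bs j + d))
    <= INR (len (bs j)) * (ln (1 + beta) + log1p (bs j)).
Proof.
  intro Hd. set (n := bs j) in *. set (k := (n + d)%nat).
  pose proof (log1p_sum_shift_le n d) as Hsum. fold k in Hsum.
  pose proof (log1p_mono k (S k) ltac:(lia)). pose proof (log1p_ge0 k).
  assert (Hend : log1p (S k) <= ln (1 + beta) + log1p n).
  { apply Rle_trans with (log1p (n + len n)); [apply log1p_mono; unfold k; lia|].
    unfold log1p. rewrite <- ln_mult by (pose proof (pos_INR n); lra).
    assert (INR (len n) <= beta * INR n) by apply len_le. pose proof (pos_INR n).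
    apply ln_le; [pose proof (pos_INR (n + len n)); lra | rewrite plus_INR; nra]. }
  assert (Hdl : INR d + 1 <= INR (len n)) by (rewrite <- S_INR; apply le_INR; lia).
  pose proof (pos_INR d).
  assert (INR d * log1p k <= INR d * log1p (S k)) by (apply Rmult_le_compat_l; lra).
  assert ((INR d + 1) * log1p (S k) <= INR (len n) * log1p (S k))
    by (apply Rmult_le_compat_r; lra).
  assert (INR (len n) * log1p (S k) <= INR (len n) * (ln (1 + beta) + log1p n))
    by (apply Rmult_le_compat_l; [apply pos_INR | lra]).
  nra.
Qed.

Lemma ln_M_le_log1p_block_start j : ln (INR M) <= log1p (bs j).
Proof.
  pose proof INR_M_ge1. pose proof (ln_ge0 (INR M) ltac:(lra)).
  pose proof block_threshold_ge. pose proof (bs_large j).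
  enough (1 * ln (INR M) <= INR M * ln (INR M)) by lra. apply Rmult_le_compat_r; lra.
Qed.

Lemma counting_gap_block_start_part j :
  INR (bs j) * (((INR M - sigma) * (1 - / INR M) - 1) * log1p (bs j) - INR M * ln (INR M))
    <= (INR M - sigma) * log1p_sum (bs j) - INR M * block_log1p_sum (bs j).
Proof.
  set (n := bs j). set (x := log1p n).
  pose proof INR_M_ge1. pose proof sigma_bound. pose proof sigma_ge0. pose proof (pos_INR n).
  pose proof (ln_ge0 (INR M) ltac:(lra)).
  pose proof (log1p_sum_lower M n M_pos (ln_M_le_log1p_block_start j)) as Hlow. fold x in Hlow.
  pose proof (block_log1p_sum_block_start j) as Hstart. fold n x in Hstart.
  set (P := (INR M - sigma) * (1 - / INR M)).
  assert (HP : 0 <= P <= INR M).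
  { assert (0 < / INR M <= 1)
      by (split; [apply Rinv_0_lt_compat | rewrite <- Rinv_1; apply Rinv_le_contravar]; lra).
    unfold P. split; [apply Rmult_le_pos|]; nra. }
  assert (P * INR n * (x - ln (INR M)) <= (INR M - sigma) * log1p_sum n).
  { replace (P * INR n * (x - ln (INR M)))
      with ((INR M - sigma) * (INR n * (1 - / INR M) * (x - ln (INR M)))) by (unfold P; ring).
    apply Rmult_le_compat_l; lra. }
  assert (P * INR n * ln (INR M) <= INR M * INR n * ln (INR M))
    by (apply Rmult_le_compat_r; [lra | apply Rmult_le_compat_r; lra]).
  nra.
Qed.

Lemma counting_gap_in_block j d : (d < len (bs j))%nat -> 0 <= counting_gap (bs j + d).
Proof.
  intro Hd. set (n := bs j) in *. set (k := (n + d)%nat). set (x := log1p n).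
  pose proof INR_M_ge1. pose proof gap_factor_ge1 as Hfactor.
  pose proof sigma_ge0. pose proof ln_lt_2. pose proof (pos_INR n).
  assert (0 <= x) by apply log1p_ge0.
  pose proof (counting_gap_block_start_part j) as Hhead. fold n x in Hhead.
  pose proof (block_log1p_sum_in_block j d Hd) as Hblock. fold n k in Hblock.
  pose proof (block_tail_le j d Hd) as Htail. fold n k x in Htail.
  assert (Hlen : INR (len n) <= beta * INR n) by apply len_le.
  assert (Hbody : sigma * (log1p_sum k - log1p_sum n + log1p (S k))
                  <= sigma * (beta * INR n) * (ln (1 + beta) + x)).
  { pose proof (ln_ge0 (1 + beta) ltac:(lra)).
    rewrite Rmult_assoc. apply Rmult_le_compat_l; [lra|].
    eapply Rle_trans; [exact Htail | apply Rmult_le_compat_r; lra]. }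
  assert (Hk : INR M * ln 2 * INR k <= INR M * ln 2 * ((1 + beta) * INR n)).
  { apply Rmult_le_compat_l; [nra|].
    assert (INR d <= INR (len n)) by (apply le_INR; lia). unfold k. rewrite plus_INR. lra. }
  assert (Hfac : INR n * x <= INR n * x * ((INR M - sigma) * (1 - / INR M) - 1 - sigma * beta))
    by (assert (0 <= INR n * x) by (apply Rmult_le_pos; lra); nra).
  assert (Hthr : INR n * block_threshold <= INR n * x)
    by (apply Rmult_le_compat_l; [lra | apply bs_large]).
  unfold block_threshold in Hthr.
  replace (counting_gap k) with
    ((INR M - sigma) * log1p_sum n - INR M * block_log1p_sum n
     - sigma * (log1p_sum k - log1p_sum n + log1p (S k)) - INR M * ln 2 * INR k)
    by (unfold counting_gap;
        replace (block_log1p_sum k) with (block_log1p_sum n + (log1p_sum k - log1p_sum n))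
          by lra; ring).
  nra.
Qed.

Lemma counting_gap_free_step k : block_of (S k) = None ->
  (sigma + INR M) * ln 2 <= (INR M - sigma) * log1p (S k) ->
  counting_gap k <= counting_gap (S k).
Proof.
  intros Hfree Hk. pose proof sigma_ge0. pose proof (log1p_succ_le (S k)).
  unfold counting_gap. simpl log1p_sum. simpl block_log1p_sum.
  unfold block_indicator. rewrite Hfree, S_INR. nra.
Qed.

Lemma counting_gap_ge_initial k :
  - (sigma * log1p_sum (S k) + INR M * ln 2 * INR k) <= counting_gap k.
Proof.
  pose proof INR_M_ge1. pose proof (block_log1p_sum_le k).
  assert (0 <= INR M * (log1p_sum k - block_log1p_sum k)) by (apply Rmult_le_pos; lra).
  unfold counting_gap. simpl log1p_sum. lra.
Qed.

(* Past the initial segment, [counting_gap] can only decrease inside blocks, where it is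
   nonnegative by [counting_gap_in_block]. *)
Lemma counting_gap_lower : exists C, forall k, - C <= counting_gap k.
Proof.
  pose proof sigma_bound. pose proof sigma_ge0. pose proof ln_lt_2. pose proof INR_M_ge1.
  destruct (log1p_unbounded ((sigma + INR M) * ln 2 / (INR M - sigma))) as [k0 Hk0].
  set (C := sigma * log1p_sum (S k0) + INR M * ln 2 * INR k0).
  assert (HC : 0 <= C).
  { pose proof (log1p_sum_ge0 (S k0)). pose proof (pos_INR k0).
    unfold C. assert (0 <= sigma * log1p_sum (S k0)) by (apply Rmult_le_pos; lra).
    assert (0 <= INR M * ln 2 * INR k0) by (repeat apply Rmult_le_pos; lra). lra. }
  exists C. intro k. induction k as [k IH] using lt_wf_ind.
  destruct (le_lt_dec k k0) as [Hle|Hlt].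
  - eapply Rle_trans; [|apply counting_gap_ge_initial].
    pose proof (log1p_sum_mono (S k) (S k0) ltac:(lia)).
    assert (INR k <= INR k0) by (apply le_INR, Hle).
    assert (sigma * log1p_sum (S k) <= sigma * log1p_sum (S k0)) by (apply Rmult_le_compat_l; lra).
    assert (INR M * ln 2 * INR k <= INR M * ln 2 * INR k0)
      by (apply Rmult_le_compat_l; [repeat apply Rmult_le_pos |]; lra).
    unfold C. lra.
  - destruct k as [|k]; [lia|].
    destruct (block_of (S k)) as [j|] eqn:Eb.
    + apply block_of_some in Eb. unfold in_block in Eb.
      replace (S k) with (bs j + (S k - bs j))%nat by lia.
      pose proof (counting_gap_in_block j (S k - bs j) ltac:(lia)). lra.
    + pose proof (IH k ltac:(lia)).
      enough (counting_gap k <= counting_gap (S k)) by lra.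
      apply counting_gap_free_step; [exact Eb|].
      pose proof (Hk0 (S k) ltac:(lia)).
      replace ((sigma + INR M) * ln 2) with
        ((INR M - sigma) * ((sigma + INR M) * ln 2 / (INR M - sigma))) by (field; lra).
      apply Rmult_le_compat_l; lra.
Qed.

Lemma counting_ineq : exists C,
  forall k, 2 * s * sum_ln digit_bound (S k) <= C + ln (INR (radix_prod k)).
Proof.
  destruct counting_gap_lower as [C HC]. exists C. intro k.
  pose proof (sum_ln_digit_bound_le (S k)). pose proof (ln_radix_prod_ge k). pose proof (HC k).
  assert (2 * s * sum_ln digit_bound (S k) <= sigma * log1p_sum (S k))
    by (unfold sigma; rewrite (Rmult_assoc (2 * s) (INR M + 2));
        apply Rmult_le_compat_l; lra).
  unfold counting_gap in *. simpl log1p_sum in *. lra.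
Qed.

End CountingGap.

Lemma radix_floor_first_difference t t' : 0 <= t < 1 -> 0 <= t' < 1 -> t <> t' ->
  exists k, (forall l, (l <= k)%nat -> radix_floor t l = radix_floor t' l) /\
            radix_floor t (S k) <> radix_floor t' (S k).
Proof.
  intros Ht Ht' Hne.
  assert (Hdiff : exists j, radix_floor t (bs j) <> radix_floor t' (bs j)).
  { assert (Hd : 0 < Rabs (t - t')) by (apply Rabs_pos_lt; lra).
    destruct (INR_unbounded (/ Rabs (t - t'))) as [j Hj].
    exists j. intro E. apply radix_floor_eq_dist in E.
    pose proof (radix_prod_block_start j) as HDj. apply lt_INR in HDj.
    assert (Hinv : 0 < / Rabs (t - t')) by (apply Rinv_0_lt_compat, Hd).
    enough (/ INR (radix_prod (bs j)) < Rabs (t - t')) by lra.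
    rewrite <- (Rinv_inv (Rabs (t - t'))).
    apply Rinv_lt_contravar; [apply Rmult_lt_0_compat|]; lra. }
  destruct Hdiff as [j Hj].
  destruct (dec_inh_nat_subset_has_unique_least_element
              (fun n => radix_floor t n <> radix_floor t' n)
              (fun n => classic _) (ex_intro _ (bs j) Hj)) as [n [[Hn Hleast] _]].
  destruct n as [|k]; [rewrite !radix_floor_0 in Hn by assumption; congruence|].
  exists k. split; [|exact Hn].
  intros l Hl. apply NNPP. intro Hl'. pose proof (Hleast l Hl'). lia.
Qed.

(* Blocks have radix 1, so a first difference of mixed-radix prefixes occurs at a free
   position, in the last mixed-radix digit. *)
Lemma radix_floor_first_difference_free t t' k :
  radix_floor t k = radix_floor t' k -> radix_floor t (S k) <> radix_floor t' (S k) ->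
  block_of (S k) = None /\ free_choice (radix_floor t) (S k) <> free_choice (radix_floor t') (S k).
Proof.
  intros Heq Hne.
  pose proof (radix_floor_succ t k) as Ht. pose proof (radix_floor_succ t' k) as Ht'.
  unfold radix in Ht, Ht'. destruct (block_of (S k)) eqn:Eb.
  - exfalso. apply Hne. rewrite Z.div_1_r in Ht, Ht'. congruence.
  - split; [reflexivity|]. intro E. apply Hne. unfold free_choice in E.
    pose proof (fan_pos (S k) ltac:(lia)).
    pose proof (Z.mod_pos_bound (radix_floor t (S k)) (Z.of_nat (fan (S k))) ltac:(lia)).
    pose proof (Z.mod_pos_bound (radix_floor t' (S k)) (Z.of_nat (fan (S k))) ltac:(lia)).
    apply Z2Nat.inj in E; try lia.
    rewrite (Z.div_mod (radix_floor t (S k)) (Z.of_nat (fan (S k)))),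
            (Z.div_mod (radix_floor t' (S k)) (Z.of_nat (fan (S k)))) by lia.
    rewrite Ht, Ht', E, Heq. reflexivity.
Qed.

Lemma coding_dist_lower t t' k :
  (forall l, (l <= k)%nat -> radix_floor t l = radix_floor t' l) ->
  radix_floor t (S k) <> radix_floor t' (S k) ->
  prod_range (fun i => / (digit_bound i * digit_bound i)) 0 (S k)
    <= Rabs (coding t - coding t').
Proof.
  intros Heq Hne.
  destruct (radix_floor_first_difference_free t t' k (Heq k (le_n k)) Hne) as [Hfree Hch].
  assert (Hbound : forall P i, (1 <= i)%nat -> INR (digits P i) + 1 <= digit_bound i).
  { intros P i Hi. unfold digit_bound. rewrite <- S_INR. apply le_INR.
    pose proof (digits_lt_base P i Hi). lia. }
  apply cf_tail0_dist_lower; try apply digits_ge2; try apply Hbound.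
  - intros i Hi. apply digits_prefix. intros l Hl. apply Heq. lia.
  - rewrite !digits_free by exact Hfree. lia.
Qed.

Lemma rpow_pos_eq d s : 0 < d -> rpow d s = Rpower d s.
Proof.
  intro Hd. unfold rpow. destruct (Req_EM_T s 0) as [->|_].
  - rewrite Rpower_O by exact Hd. reflexivity.
  - destruct (Req_EM_T d 0); [lra | reflexivity].
Qed.

Lemma coding_inverse_holder (s C : R) : 0 <= s ->
  (forall k, 2 * s * sum_ln digit_bound (S k) <= C + ln (INR (radix_prod k))) ->
  forall t t', 0 <= t < 1 -> 0 <= t' < 1 ->
  Rabs (t - t') <= exp C * rpow (Rabs (coding t - coding t')) s.
Proof.
  intros Hs Hineq t t' Ht Ht'.
  destruct (Req_dec t t') as [<-|Hne].
  { rewrite Rminus_diag, Rabs_R0. pose proof (rpow_ge0 (Rabs (coding t - coding t)) s).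
    pose proof (exp_pos C). nra. }
  destruct (radix_floor_first_difference t t' Ht Ht' Hne) as [k [Heq Hk]].
  pose proof (coding_dist_lower t t' k Heq Hk) as Hdist.
  set (L := prod_range (fun i => / (digit_bound i * digit_bound i)) 0 (S k)) in Hdist.
  assert (HB : forall i, 0 < digit_bound i) by (intro i; pose proof (digit_bound_ge2 i); lra).
  assert (HL : 0 < L).
  { apply prod_range_pos. intros i _. apply Rinv_0_lt_compat, Rmult_lt_0_compat; apply HB. }
  assert (HlnL : ln L = -2 * sum_ln digit_bound (S k)) by (apply ln_prod_range_inv_sqr, HB).
  assert (HD : 0 < INR (radix_prod k)) by (apply lt_0_INR; pose proof (radix_prod_pos k); lia).
  pose proof (radix_floor_eq_dist t t' k (Heq k (le_n k))) as Hclose.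
  rewrite rpow_pos_eq by lra.
  apply Rle_trans with (exp C * Rpower L s);
    [|apply Rmult_le_compat_l; [left; apply exp_pos | apply Rle_Rpower_l; lra]].
  unfold Rpower. rewrite <- exp_plus, HlnL.
  rewrite <- (exp_ln (INR (radix_prod k))), <- exp_Ropp in Hclose by exact HD.
  left. eapply Rlt_le_trans; [exact Hclose|]. apply exp_le.
  pose proof (Hineq k). lra.
Qed.

End Coding.
End Blocks.

Lemma sparse_subsequence (P : nat -> Prop) (g : nat -> nat) :
  (forall N, exists m, (N <= m)%nat /\ P m) ->
  exists bs : nat -> nat,
    (1 <= bs 0)%nat /\ (forall j, P (bs j)) /\ (forall j, (g (bs j) <= bs (S j))%nat).
Proof.
  intro HP.
  set (pick := fun N => epsilon (inhabits 0%nat) (fun m => (N <= m)%nat /\ P m)).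
  assert (Hpick : forall N, (N <= pick N)%nat /\ P (pick N))
    by (intro N; apply epsilon_spec, HP).
  exists (fix bs j := match j with O => pick 1%nat | S j' => pick (g (bs j')) end).
  split; [apply Hpick | split; [intros [|j]; apply Hpick | intro j; apply Hpick]].
Qed.

Lemma block_parameters (a s : R) : 0 <= a -> 0 <= s -> 2 * s * (1 + a) < 1 ->
  exists delta (M : nat), 0 < delta /\ (1 <= M)%nat /\
    5 <= INR M * (1 - 2 * s * (1 + (a + 2 * delta))).
Proof.
  intros Ha Hs Hsa.
  set (delta := (1 - 2 * s * (1 + a)) / (4 * (2 * s + 1))).
  assert (Hdelta : 0 < delta) by (apply Rdiv_lt_0_compat; lra).
  set (rho := 1 - 2 * s * (1 + (a + 2 * delta))).
  assert (Hrho : rho = (1 - 2 * s * (1 + a)) * (s + 1) / (2 * s + 1))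
    by (unfold rho, delta; field; lra).
  assert (Hrho0 : 0 < rho)
    by (rewrite Hrho; apply Rdiv_lt_0_compat; [apply Rmult_lt_0_compat|]; lra).
  destruct (INR_unbounded (5 / rho)) as [M0 HM0].
  exists delta, (S M0). split; [exact Hdelta | split; [lia|]]. fold rho.
  rewrite S_INR. replace 5 with (5 / rho * rho) by (field; lra).
  apply Rmult_le_compat_r; lra.
Qed.

Lemma frequent_block_positions (nu : nat -> nat) (a delta W : R) : 0 < delta ->
  (forall eps, 0 < eps -> forall N, exists n, (N <= n)%nat /\ INR (nu (S n)) / INR (S n) < a + eps) ->
  forall N, exists m, (N <= m)%nat /\
    INR (S (nu m)) <= (a + 2 * delta) * INR m /\ W <= log1p m.
Proof.
  intros Hdelta Hfreq N. destruct (log1p_unbounded W) as [k0 Hk0].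
  destruct (INR_unbounded (/ delta)) as [k1 Hk1].
  destruct (Hfreq delta Hdelta (N + k0 + k1)%nat) as [n [Hn Hu]].
  exists (S n). split; [lia | split; [|apply Hk0; lia]].
  assert (HS : 0 < INR (S n)) by (apply lt_0_INR; lia).
  apply (Rmult_lt_compat_r (INR (S n))) in Hu; [|exact HS].
  unfold Rdiv in Hu. rewrite Rmult_assoc, Rinv_l, Rmult_1_r in Hu by lra.
  assert (1 <= delta * INR (S n)).
  { assert (INR k1 <= INR (S n)) by (apply le_INR; lia).
    replace 1 with (delta * / delta) by (field; lra).
    apply Rmult_le_compat_l; lra. }
  rewrite S_INR. nra.
Qed.

Lemma F_set_hausdorff_measure_neq0 (nu : nat -> nat) (a s : R) :
  0 <= a -> 0 <= s -> 2 * s * (1 + a) < 1 ->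
  (forall eps, 0 < eps -> forall N, exists n, (N <= n)%nat /\ INR (nu (S n)) / INR (S n) < a + eps) ->
  hausdorff_measure s (F_set nu) <> Finite 0.
Proof.
  intros Ha Hs Hsa Hfreq.
  destruct (block_parameters a s Ha Hs Hsa) as [delta [M [Hdelta [HM HMlarge]]]].
  set (beta := a + 2 * delta) in HMlarge.
  set (len := fun n => S (nu n)).
  set (W := block_threshold M s beta).
  set (Good := fun m => INR (len m) <= beta * INR m /\ W <= log1p m).
  assert (HGood : forall N, exists m, (N <= m)%nat /\ Good m)
    by (apply frequent_block_positions; assumption).
  destruct (sparse_subsequence Good (fun n => S (M * (n + len n))) HGood)
    as [bs [Hbs0 [HbsGood Hbs]]].
  assert (Hbs_succ : forall j, (bs j + len (bs j) < bs (S j))%nat)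
    by (intro j; pose proof (Hbs j); nia).
  assert (Hsparse : forall j, (M * prev_block_end len bs j <= bs j)%nat)
    by (intros [|j]; simpl; [lia | pose proof (Hbs j); lia]).
  assert (Hbeta : 0 <= beta) by (unfold beta; lra).
  destruct (counting_ineq len bs Hbs0 Hbs_succ M HM s beta Hs Hbeta HMlarge
              (fun j => proj1 (HbsGood j)) Hsparse (fun j => proj2 (HbsGood j)))
    as [C HC].
  apply (hausdorff_measure_neq0_of_inverse_holder _ (coding len bs M) (/ 2) (exp C) s);
    [lra | apply exp_pos | exact Hs | |].
  - intros t _. apply coding_in_F_set; [exact Hbs0 | exact Hbs_succ | exact HM | reflexivity].
  - intros t t' Ht Ht'.
    apply (coding_inverse_holder len bs Hbs0 Hbs_succ M HM s C Hs HC); lra.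
Qed.

Theorem proposition4p1 (nu : nat -> nat)
  (hpos : forall n : nat, (1 <= n)%nat -> (0 < nu n)%nat)
  (hinc : forall n : nat, (1 <= n)%nat -> (nu n <= nu (S n))%nat) :
  Rbar_le
    (Finite (dim_bound (LimInf_seq (fun n : nat => INR (nu (S n)) / INR (S n)))))
    (hausdorff_dim (F_set nu)).
Proof.
  set (u := fun n : nat => INR (nu (S n)) / INR (S n)).
  assert (Hu : is_LimInf_seq u (LimInf_seq u)) by (unfold LimInf_seq; apply proj2_sig).
  apply Rbar_glb_greatest. intros x [s [Hs [-> Hnull]]].
  fold u. destruct (LimInf_seq u) as [a| |]; simpl; try lra.
  assert (Hfreq : forall eps, 0 < eps -> forall N, exists n, (N <= n)%nat /\ u n < a + eps)
    by (intros eps Heps; exact (proj1 (Hu (mkposreal eps Heps)))).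
  assert (Ha : 0 <= a).
  { apply Rnot_lt_le. intro Hneg. destruct (Hfreq (- a) ltac:(lra) 0%nat) as [n [_ Hn]].
    enough (0 <= u n) by lra.
    apply Rdiv_le_0_compat; [apply pos_INR | apply lt_0_INR; lia]. }
  apply Rnot_lt_le. intro Hlt.
  apply (F_set_hausdorff_measure_neq0 nu a s Ha Hs); [|exact Hfreq | exact Hnull].
  apply (Rmult_lt_compat_r (2 * (1 + a))) in Hlt; [|lra].
  replace (1 / (2 * (1 + a)) * (2 * (1 + a))) with 1 in Hlt by (field; lra). lra.
Qed.
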